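(* Let $\Gamma$ be a $\Bbbk$-algebra. Then $\Gamma$ is quasicommutative if and only if every finite-dimensional $\Gamma$-module $V$ is a generalized weight module, i.e. $V=\bigoplus_{\mathfrak m\in\mathrm{cfs}(\Gamma)}V(\mathfrak m)$ where $V(\mathfrak m)=\{v\in V:\mathfrak m^kv=0\text{ for some }k\ge0\}$.
   Context: $\mathrm{cfs}(\Gamma)$: maximal two-sided ideals $\mathfrak m$ of $\Gamma$ with $\dim\Gamma/\mathfrak m<\infty$; $S_{\mathfrak m}$ is the unique simple $\Gamma/\mathfrak m$-module. $\Gamma$ is quasicommutative if $\mathrm{Ext}^1_\Gamma(S_{\mathfrak m},S_{\mathfrak n})=0$ for all distinct $\mathfrak m,\mathfrak n\in\mathrm{cfs}(\Gamma)$. *)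

From HB Require Import structures.
From mathcomp Require Import all_boot all_order all_algebra.
Set Implicit Arguments. Unset Strict Implicit. Unset Printing Implicit Defensive.
Import GRing.Theory.
Local Open Scope ring_scope.

Section QC.
Variables (k : fieldType) (G : algType k).

Definition ideal (I : G -> Prop) : Prop :=
  [/\ I 0, (forall x y, I x -> I y -> I (x + y))
    & (forall a x, I x -> I (a * x) /\ I (x * a))].

Definition same_set (I J : G -> Prop) : Prop := forall x, I x <-> J x.

Definition max_ideal (I : G -> Prop) : Prop :=
  [/\ ideal I, ~ (forall x, I x)
    & forall J, ideal J -> (forall x, I x -> J x) ->
        same_set J I \/ (forall x, J x)].

Definition fin_codim (I : G -> Prop) : Prop :=
  exists d (b : 'I_d -> G), forall x, exists c : 'I_d -> k,
    I (x - \sum_(i < d) c i *: b i).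

Definition cfs (I : G -> Prop) : Prop := max_ideal I /\ fin_codim I.

Inductive idmul (I J : G -> Prop) : G -> Prop :=
  | idmul0 : idmul I J 0
  | idmul_prod a b : I a -> J b -> idmul I J (a * b)
  | idmul_add x y : idmul I J x -> idmul I J y -> idmul I J (x + y).

Fixpoint idpow (I : G -> Prop) (n : nat) : G -> Prop :=
  match n with
  | 0 => fun _ => True
  | n'.+1 => idmul I (idpow I n')
  end.

(* a finite-dimensional G-module: k^n (column vectors) with an algebra
   morphism rho : G -> 'M_n, gamma acting by v |-> rho gamma *m v *)
Definition is_rep n (rho : G -> 'M[k]_n) : Prop :=
  [/\ forall (a : k) x y, rho (a *: x + y) = a *: rho x + rho y,
      rho 1 = 1%:M
    & forall x y, rho (x * y) = rho x *m rho y].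

Definition gwspace n (rho : G -> 'M[k]_n) (m : G -> Prop) (v : 'cV[k]_n) : Prop :=
  exists e : nat, forall x, idpow m e x -> rho x *m v = 0.

Definition gen_weight n (rho : G -> 'M[k]_n) : Prop :=
  (forall v : 'cV[k]_n, exists l (ms : 'I_l -> G -> Prop) (ws : 'I_l -> 'cV[k]_n),
      (forall i, cfs (ms i) /\ gwspace rho (ms i) (ws i)) /\ v = \sum_(i < l) ws i)
  /\
  (forall l (ms : 'I_l -> G -> Prop) (ws : 'I_l -> 'cV[k]_n),
      (forall i j, i != j -> ~ same_set (ms i) (ms j)) ->
      (forall i, cfs (ms i) /\ gwspace rho (ms i) (ws i)) ->
      \sum_(i < l) ws i = 0 -> forall i, ws i = 0).

Definition submodule n (rho : G -> 'M[k]_n) (P : 'cV[k]_n -> Prop) : Prop :=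
  [/\ P 0, (forall (a : k) u v, P u -> P v -> P (a *: u + v))
    & forall x v, P v -> P (rho x *m v)].

Definition simple_rep n (rho : G -> 'M[k]_n) : Prop :=
  [/\ is_rep rho, (0 < n)%N
    & forall P, submodule rho P ->
        (forall v, P v -> v = 0) \/ (forall v, P v)].

Definition annihilated n (rho : G -> 'M[k]_n) (m : G -> Prop) : Prop :=
  forall x, m x -> rho x = 0.

(* Ext^1_G(S_m, S_n) = 0 (Yoneda description): every extension
   0 -> S_n -> E -> S_m -> 0 splits.  E = k^(q+p) with S_n = first q
   coordinates (a submodule) and quotient S_m on the last p coordinates. *)
Definition ext1_zero (m n : G -> Prop) : Prop :=
  forall p q (rm : G -> 'M[k]_p) (rn : G -> 'M[k]_q),
    simple_rep rm -> annihilated rm m ->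
    simple_rep rn -> annihilated rn n ->
    forall c : G -> 'M[k]_(q, p),
      is_rep (fun x => block_mx (rn x) (c x) 0 (rm x)) ->
      exists s : 'M[k]_(q + p, p),
        (forall x, block_mx (rn x) (c x) 0 (rm x) *m s = s *m rm x)
        /\ dsubmx s = 1%:M.

Definition quasicommutative : Prop :=
  forall m n, cfs m -> cfs n -> ~ same_set m n -> ext1_zero m n.

End QC.

From mathcomp Require Import all_boot all_order all_algebra.
From mathcomp Require Import ring zify.
From Stdlib Require Import Classical ClassicalEpsilon.
Set Implicit Arguments. Unset Strict Implicit. Unset Printing Implicit Defensive.
Import GRing.Theory.
Local Open Scope ring_scope.

(* An extension E of S_m by S_n is split by lifting a basis of S_m into the
   generalized weight space E(m), which meets S_n trivially when m <> n.
   Conversely, the sum of the V(m) is always direct, as powers of distinct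
   maximal ideals are comaximal; that it exhausts V is proved down a composition
   series 0 = V_0 < ... < V_r = V: if V/V_(i+1) is spanned by generalized weight
   vectors, so is V/V_i.  A vector of weight m modulo V_(i+1) generates a
   submodule Y with Y/V_(i+1) killed by a power of m, and when m is not the
   annihilator of the simple module V_(i+1)/V_i, the latter has a complement in
   Y/V_i, built one composition factor of Y/V_(i+1) at a time by splitting
   extensions of simple modules.  Annihilators of finite-dimensional simple
   modules are in cfs because an ideal not contained in the annihilator
   contains, by a Fitting-lemma argument, an element acting as the identity. *)

Definition asbool (P : Prop) : bool :=
  if excluded_middle_informative P then true else false.

Lemma asboolP (P : Prop) : reflect P (asbool P).
Proof. by rewrite /asbool; case: excluded_middle_informative => H; constructor. Qed.

Lemma not_all_sub (T : Type) (A B : T -> Prop) :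
  ~ (forall x, A x -> B x) -> exists x, A x /\ ~ B x.
Proof.
move=> nAB; apply: NNPP => nx; apply: nAB => x Ax.
by apply: NNPP => nBx; apply: nx; exists x.
Qed.

(** * Maximal ideals and their powers *)

Section Ideals.
Variables (k : fieldType) (G : algType k).
Implicit Types (I J m M : G -> Prop) (x y a b : G).

Lemma ideal0 I : ideal I -> I 0. Proof. by case. Qed.
Lemma idealD I x y : ideal I -> I x -> I y -> I (x + y). Proof. by case=> _ + _; apply. Qed.
Lemma ideal_mull I a x : ideal I -> I x -> I (a * x). Proof. by case=> _ _ H /(H a) []. Qed.
Lemma ideal_mulr I a x : ideal I -> I x -> I (x * a). Proof. by case=> _ _ H /(H a) []. Qed.
Lemma idealZ I (c : k) x : ideal I -> I x -> I (c *: x).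
Proof. by move=> hI Ix; rewrite -[x]mul1r scalerAl; apply: ideal_mull. Qed.
Lemma ideal1_full I : ideal I -> I 1 -> forall x, I x.
Proof. by move=> hI I1 x; rewrite -[x]mulr1; apply: ideal_mull. Qed.

Lemma idmul_subl I J x : ideal I -> idmul I J x -> I x.
Proof. by move=> hI; elim=> *; [apply: ideal0 | apply: ideal_mulr | apply: idealD]. Qed.
Lemma idmul_subr I J x : ideal J -> idmul I J x -> J x.
Proof. by move=> hJ; elim=> *; [apply: ideal0 | apply: ideal_mull | apply: idealD]. Qed.

Lemma idmul_ideal I J : ideal I -> ideal J -> ideal (idmul I J).
Proof.
move=> hI hJ; split=> [||c x]; [exact: idmul0 | exact: idmul_add |].
elim=> [|a b Ia Jb|u v _ [Hu1 Hu2] _ [Hv1 Hv2]].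
- by rewrite mulr0 mul0r; split; apply: idmul0.
- split; first by rewrite mulrA; apply: idmul_prod => //; apply: ideal_mull.
  by rewrite -mulrA; apply: idmul_prod => //; apply: ideal_mulr.
- by rewrite mulrDr mulrDl; split; apply: idmul_add.
Qed.

Lemma idpow_ideal m e : ideal m -> ideal (idpow m e).
Proof. by move=> hm; elim: e => [|e IH] /=; [split | exact: idmul_ideal]. Qed.

Lemma idpow_le m e e' x : ideal m -> (e <= e')%N -> idpow m e' x -> idpow m e x.
Proof.
move=> hm; elim: e' => [|e' IH]; first by rewrite leqn0 => /eqP ->.
rewrite leq_eqVlt => /orP [/eqP -> //| /IH le_e] /= He'.
exact/le_e/(idmul_subr (idpow_ideal e' hm) He').
Qed.

Lemma idpow1_sub m x : ideal m -> idpow m 1 x -> m x.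
Proof. exact: idmul_subl. Qed.

Lemma idpow_same_set m m' e x : same_set m m' -> idpow m e x -> idpow m' e x.
Proof.
move=> mm'; elim: e x => [//|e IH] x /=.
elim=> [|a b /mm' ma /IH Jb|u v _ Hu _ Hv]; by constructor.
Qed.

Lemma same_set_sym I J : same_set I J -> same_set J I.
Proof. by move=> IJ x; split=> /IJ. Qed.

Lemma max_ideal_proper M : max_ideal M -> ~ M 1.
Proof. by case=> hM nfull _ /(ideal1_full hM). Qed.

Definition idsum I J : G -> Prop := fun x => exists i y, [/\ I i, J y & x = i + y].

Lemma idsum_ideal I J : ideal I -> ideal J -> ideal (idsum I J).
Proof.
move=> hI hJ; split.
- by exists 0, 0; rewrite addr0; split => //; apply: ideal0.
- move=> _ _ [i1 [y1 [I1 J1 ->]]] [i2 [y2 [I2 J2 ->]]].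
  by exists (i1 + i2), (y1 + y2); rewrite addrACA; split => //; apply: idealD.
- move=> a _ [i [y [Ii Jy ->]]]; split.
  + by exists (a * i), (a * y); rewrite mulrDr; split => //; apply: ideal_mull.
  + by exists (i * a), (y * a); rewrite mulrDl; split => //; apply: ideal_mulr.
Qed.

Lemma max_ideal_add1 M I a : max_ideal M -> ideal I -> I a -> ~ M a ->
  exists i y, [/\ I i, M y & 1 = i + y].
Proof.
move=> [hM _ Mmax] hI Ia Ma.
have M_sub x : M x -> idsum I M x.
  by move=> Mx; exists 0, x; rewrite add0r; split => //; apply: ideal0.
case: (Mmax _ (idsum_ideal hI hM) M_sub) => [/(_ a) IMa | /(_ 1) //].
by case: Ma; apply/IMa; exists a, 0; rewrite addr0; split => //; apply: ideal0.
Qed.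

Lemma max_ideal_prime M I J : max_ideal M -> ideal I -> ideal J ->
  (forall x, idmul I J x -> M x) ->
  (forall x, I x -> M x) \/ (forall x, J x -> M x).
Proof.
move=> maxM hI hJ IJ_M; apply: NNPP => /not_or_and [/not_all_sub [a [Ia Ma]]].
move=> /not_all_sub [b [Jb Mb]]; have [hM _ _] := maxM.
have [i [y [Ii My E1]]] := max_ideal_add1 maxM hI Ia Ma.
have [j [z [Jj Mz E2]]] := max_ideal_add1 maxM hJ Jb Mb.
apply: (max_ideal_proper maxM).
have -> : (1 : G) = i * j + (i * z + y * (j + z)).
  by rewrite -[1 in LHS]mulr1 {1}E1 {1}E2 mulrDl mulrDr addrA.
apply: idealD => //; first by apply: IJ_M; apply: idmul_prod.
by apply: idealD => //; [apply: ideal_mull | apply: ideal_mulr].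
Qed.

Lemma max_ideal_idpow_sub M m e : max_ideal M -> ideal m ->
  (forall x, idpow m e x -> M x) -> forall x, m x -> M x.
Proof.
move=> maxM hm; elim: e => [|e IH] me_M; first by case: (max_ideal_proper maxM); apply: me_M.
by case: (max_ideal_prime maxM hm (idpow_ideal e hm) me_M) => // /IH.
Qed.

Lemma max_ideal_sub_same M N : max_ideal M -> max_ideal N ->
  (forall x, N x -> M x) -> same_set M N.
Proof. by move=> [hM nfull _] [_ _ Nmax] /(Nmax _ hM) []. Qed.

Lemma idpow_comax m n : max_ideal m -> max_ideal n -> ~ same_set m n ->
  forall e1 e2, exists x y, [/\ idpow m e1 x, idpow n e2 y & x + y = 1].
Proof.
move=> maxm maxn mn e1 e2; have [hm _ _] := maxm; have [hn _ _] := maxn.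
have [q0 [ne2q0 mq0]] : exists q0, idpow n e2 q0 /\ ~ m q0.
  apply: not_all_sub => ne2_m; apply: mn; apply: max_ideal_sub_same => //.
  exact: max_ideal_idpow_sub ne2_m.
have [q [x0 [ne2q mx0 E]]] := max_ideal_add1 maxm (idpow_ideal e2 hn) ne2q0 mq0.
elim: e1 => [|e1 [x [y [me1x ne2y xy1]]]].
  by exists 1, 0; rewrite addr0; split => //; apply: ideal0; apply: idpow_ideal.
have hne2 := idpow_ideal e2 hn.
(* 1 = (q + x0) (x + y) *)
exists (x0 * x), (x0 * y + q * (x + y)); split; first exact: idmul_prod.
  by apply: (idealD hne2); [apply: ideal_mull | apply: ideal_mulr].
by rewrite addrA -mulrDr xy1 -mulrDl mulr1 addrC -E.
Qed.

End Ideals.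

Lemma mulmx_delta_colP (R : pzRingType) p q (A B : 'M[R]_(p, q)) :
  (forall j, A *m delta_mx j (0 : 'I_1) = B *m delta_mx j 0) -> A = B.
Proof.
by move=> AB; apply/matrixP => i j; have /matrixP/(_ i 0) := AB j; rewrite -!colE !mxE.
Qed.

(** * Generalized weight spaces *)

Section Representation.
Variables (k : fieldType) (G : algType k) (n : nat) (rho : G -> 'M[k]_n).
Hypothesis rho_rep : is_rep rho.

Lemma repD x y : rho (x + y) = rho x + rho y.
Proof. by case: rho_rep => lin _ _; have := lin 1 x y; rewrite !scale1r. Qed.
Lemma rep0 : rho 0 = 0.
Proof. by apply: (@addrI _ (rho 0)); rewrite -repD !addr0. Qed.
Lemma repZ (c : k) x : rho (c *: x) = c *: rho x.
Proof. by case: rho_rep => lin _ _; have := lin c x 0; rewrite !addr0 rep0 addr0. Qed.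
Lemma repN x : rho (- x) = - rho x.
Proof. by rewrite -scaleN1r repZ scaleN1r. Qed.
Lemma repB x y : rho (x - y) = rho x - rho y.
Proof. by rewrite repD repN. Qed.
Lemma rep1 : rho 1 = 1%:M. Proof. by case: rho_rep. Qed.
Lemma repM x y : rho (x * y) = rho x *m rho y. Proof. by case: rho_rep. Qed.
Lemma rep_sum d (F : 'I_d -> G) : rho (\sum_(i < d) F i) = \sum_(i < d) rho (F i).
Proof. exact: (big_morph rho repD rep0). Qed.

Implicit Types (m : G -> Prop) (u w : 'cV[k]_n).

Lemma gwspace0 m : gwspace rho m 0.
Proof. by exists 0%N => x _; rewrite mulmx0. Qed.
Lemma gwspaceD m u w : ideal m -> gwspace rho m u -> gwspace rho m w -> gwspace rho m (u + w).
Proof.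
move=> hm [e1 He1] [e2 He2]; exists (e1 + e2)%N => x Hx.
by rewrite mulmxDr He1 ?He2 ?addr0 //; apply: idpow_le Hx; rewrite ?leq_addl ?leq_addr.
Qed.
Lemma gwspaceZ m (c : k) u : gwspace rho m u -> gwspace rho m (c *: u).
Proof. by case=> e He; exists e => x Hx; rewrite -scalemxAr He // scaler0. Qed.
Lemma gwspaceB m u w : ideal m -> gwspace rho m u -> gwspace rho m w -> gwspace rho m (u - w).
Proof. by move=> hm Hu Hw; apply: gwspaceD => //; rewrite -scaleN1r; apply: gwspaceZ. Qed.
Lemma gwspaceM m x u : ideal m -> gwspace rho m u -> gwspace rho m (rho x *m u).
Proof.
move=> hm [e He]; exists e => y Hy; rewrite mulmxA -repM He //.
exact (ideal_mulr x (idpow_ideal e hm) Hy).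
Qed.
Lemma gwspace_sum m (I : Type) (r : seq I) (P : pred I) (F : I -> 'cV[k]_n) : ideal m ->
  (forall i, P i -> gwspace rho m (F i)) -> gwspace rho m (\sum_(i <- r | P i) F i).
Proof. by move=> hm HF; elim/big_ind: _ => //; [apply: gwspace0 | move=> *; apply: gwspaceD]. Qed.
Lemma gwspace_same_set m m' u : same_set m m' -> gwspace rho m u -> gwspace rho m' u.
Proof. by move=> mm' [e He]; exists e => x /(idpow_same_set (same_set_sym mm')) /He. Qed.

Lemma gwspace_annihilated m u : ideal m -> annihilated rho m -> gwspace rho m u.
Proof. by move=> hm ann; exists 1%N => x /(idpow1_sub hm) /ann ->; rewrite mul0mx. Qed.

Lemma gwspace_comax_eq0 m m' u : max_ideal m -> max_ideal m' -> ~ same_set m m' ->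
  gwspace rho m u -> gwspace rho m' u -> u = 0.
Proof.
move=> maxm maxm' mm' [e1 He1] [e2 He2].
have [x [y [me1x m'e2y xy1]]] := idpow_comax maxm maxm' mm' e1 e2.
by rewrite -[u]mul1mx -rep1 -xy1 repD mulmxDl He1 // He2 // addr0.
Qed.

Lemma gen_weight_uniq l (ms : 'I_l -> G -> Prop) (ws : 'I_l -> 'cV[k]_n) :
  (forall i j, i != j -> ~ same_set (ms i) (ms j)) ->
  (forall i, max_ideal (ms i) /\ gwspace rho (ms i) (ws i)) ->
  \sum_(i < l) ws i = 0 -> forall i, ws i = 0.
Proof.
elim: l ms ws => [|l IH] ms ws ms_neq Hws sum0 i; first by case: i.
have [maxl [e He]] := Hws ord_max.
have sum_lift : \sum_(j < l) ws (lift ord_max j) = - ws ord_max.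
  apply/eqP; rewrite -addr_eq0; apply/eqP; rewrite -[RHS]sum0 big_ord_recr /=.
  congr (_ + _).
  by apply: eq_bigr => j _; congr ws; apply: val_inj; rewrite /= /bump leqNgt ltn_ord.
(* For y in m_l^e the rho y *m ws (lift ord_max j) sum to 0, hence vanish by
   induction: each ws (lift ord_max j) lies in V(m_l) as well. *)
have ws_lift0 j : ws (lift ord_max j) = 0.
  have [maxj gwj] := Hws (lift ord_max j).
  apply: (gwspace_comax_eq0 maxj maxl _ gwj); first by apply: ms_neq; rewrite eq_sym neq_lift.
  exists e => y Hy.
  apply: (IH (fun j => ms (lift ord_max j)) (fun j => rho y *m ws (lift ord_max j))).
  - by move=> a b ab; apply: ms_neq; rewrite (inj_eq lift_inj).
  - move=> a; have [maxa gwa] := Hws (lift ord_max a); split => //.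
    by apply: gwspaceM => //; case: maxa.
  - by rewrite -mulmx_sumr sum_lift mulmxN He // oppr0.
case: (unliftP ord_max i) => [j ->|->]; first exact: ws_lift0.
by apply/eqP; rewrite -oppr_eq0 -sum_lift big1.
Qed.

End Representation.

Section ColumnMatrix.
Variables (R : comPzRingType) (p q : nat) (u : 'I_q -> 'cV[R]_p).

Definition cols_mx : 'M[R]_(p, q) := \matrix_(a, j) u j a 0.

Lemma cols_mx_delta j : cols_mx *m delta_mx j 0 = u j.
Proof. by rewrite -colE; apply/matrixP => a b; rewrite !mxE (ord1 b). Qed.

Lemma mul_cols_mx (v : 'cV[R]_q) : cols_mx *m v = \sum_j v j 0 *: u j.
Proof.
apply/matrixP => a b; rewrite (ord1 b) !mxE summxE.
by apply: eq_bigr => j _; rewrite !mxE mulrC.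
Qed.

End ColumnMatrix.

Section Extension.
Variables (k : fieldType) (G : algType k) (p q : nat).
Variables (rm : G -> 'M[k]_p) (rn : G -> 'M[k]_q) (c : G -> 'M[k]_(q, p)).
Variables (m n : G -> Prop).
Hypotheses (rm_rep : is_rep rm) (rn_rep : is_rep rn).
Hypotheses (cfs_m : cfs m) (cfs_n : cfs n) (mn : ~ same_set m n).
Hypotheses (rm_ann : annihilated rm m) (rn_ann : annihilated rn n).

Let E x := block_mx (rn x) (c x) 0 (rm x).
Hypothesis E_rep : is_rep E.

Let max_m : max_ideal m. Proof. by case: cfs_m. Qed.
Let max_n : max_ideal n. Proof. by case: cfs_n. Qed.
Let ideal_m : ideal m. Proof. by case: max_m. Qed.
Let ideal_n : ideal n. Proof. by case: max_n. Qed.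

Implicit Types (w : 'cV[k]_(q + p)).

Lemma dsubmx_ext x w : dsubmx (E x *m w) = rm x *m dsubmx w.
Proof. by rewrite -[w in E x *m w]vsubmxK mul_block_col col_mxKd mul0mx add0r. Qed.

Lemma usubmx_ext x w : dsubmx w = 0 -> usubmx (E x *m w) = rn x *m usubmx w.
Proof.
by move=> w0; rewrite -[w in E x *m w]vsubmxK w0 mul_block_col col_mxKu mulmx0 addr0.
Qed.

Lemma gwspace_dsubmx m' w : gwspace E m' w -> gwspace rm m' (dsubmx w).
Proof. by case=> e He; exists e => x /He Exw; rewrite -dsubmx_ext Exw linear0. Qed.

Lemma gwspace_ext_dsubmx0 w : gwspace E m w -> dsubmx w = 0 -> w = 0.
Proof.
move=> [e He] w0; suff u0 : usubmx w = 0 by rewrite -[w]vsubmxK u0 w0 col_mx0.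
apply: (gwspace_comax_eq0 rn_rep max_m max_n mn); last exact: gwspace_annihilated.
by exists e => x /He Exw; rewrite -usubmx_ext // Exw linear0.
Qed.

Lemma gen_weight_ext_lift : gen_weight E ->
  forall y, exists u, gwspace E m u /\ dsubmx u = y.
Proof.
move=> [gw_span _] y; have [l [ms [ws [Hws y_sum]]]] := gw_span (col_mx 0 y).
pose P i := asbool (same_set (ms i) m).
exists (\sum_(i < l | P i) ws i); split.
  apply: gwspace_sum => // i /asboolP msm.
  by apply: gwspace_same_set msm _; case: (Hws i).
have -> : y = dsubmx (\sum_(i < l | P i) ws i) + dsubmx (\sum_(i < l | ~~ P i) ws i).
  by rewrite -[LHS](col_mxKd (0 : 'cV_q)) y_sum (bigID P) linearD.
suff -> : dsubmx (\sum_(i < l | ~~ P i) ws i) = 0 by rewrite addr0.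
rewrite linear_sum big1 // => i /asboolP msm.
have [[maxi _] gwi] := Hws i.
apply: (gwspace_comax_eq0 rm_rep maxi max_m msm (gwspace_dsubmx gwi)).
exact: gwspace_annihilated.
Qed.

Lemma gen_weight_ext_split : gen_weight E ->
  exists s : 'M[k]_(q + p, p), (forall x, E x *m s = s *m rm x) /\ dsubmx s = 1%:M.
Proof.
move=> /gen_weight_ext_lift lift.
have [u /all_and2 [gw_u dsub_u]] := fin_all_exists (fun j : 'I_p => lift (delta_mx j 0)).
have gw_s v : gwspace E m (cols_mx u *m v).
  by rewrite mul_cols_mx; apply: gwspace_sum => // j _; apply: gwspaceZ.
have dsub_s : dsubmx (cols_mx u) = 1%:M.
  by apply: mulmx_delta_colP => j; rewrite mul_dsub_mx cols_mx_delta dsub_u mul1mx.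
exists (cols_mx u); split=> // x; apply: mulmx_delta_colP => j.
apply/eqP; rewrite -subr_eq0 -!mulmxA cols_mx_delta; apply/eqP.
apply: gwspace_ext_dsubmx0.
  by apply: gwspaceB => //; apply: gwspaceM.
by rewrite linearB /= dsubmx_ext dsub_u -mul_dsub_mx dsub_s mul1mx subrr.
Qed.

End Extension.

Lemma gen_weight_quasicommutative (k : fieldType) (G : algType k) :
  (forall (n : nat) (rho : G -> 'M[k]_n), is_rep rho -> gen_weight rho) ->
  quasicommutative G.
Proof.
move=> gw m n cfs_m cfs_n mn p q rm rn [rm_rep _ _] rm_ann [rn_rep _ _] rn_ann c E_rep.
exact: gen_weight_ext_split rm_rep rn_rep cfs_m cfs_n mn rm_ann rn_ann E_rep (gw _ _ E_rep).
Qed.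

(** * Annihilators of simple modules *)

Section FittingIdempotent.
Variables (k : fieldType) (q : nat) (X : 'M[k]_q.+1) (v : 'cV[k]_q.+1).
Hypothesis Xv : X *m v = v.

Lemma horner_mx_fixed (p : {poly k}) : horner_mx X p *m v = p.[1] *: v.
Proof.
elim/poly_ind: p => [|p c IH]; first by rewrite rmorph0 mul0mx horner0 scale0r.
rewrite rmorphD rmorphM /= horner_mx_X horner_mx_C mulmxDl -mulmxE -mulmxA Xv IH.
by rewrite mul_scalar_mx hornerMXaddC mulr1 scalerDl.
Qed.

(* The projection onto the Fitting component on which X is invertible, along
   the generalized kernel of X, is a polynomial in X without constant term. *)
Lemma fitting_idempotent : v != 0 -> exists p : {poly k},
  let P := horner_mx X (p * 'X) in P *m P = P /\ P *m v = v.
Proof.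
move=> v0; set chi := char_poly X.
have chi0 : chi != 0 by apply: monic_neq0; apply: char_poly_monic.
have [e [r r0 chiE]] := multiplicity_XsubC chi 0.
rewrite chi0 /= in r0; rewrite polyC0 subr0 in chiE.
have cop : coprimep ('X ^+ e.+1) r.
  rewrite coprimep_expl // coprimep_sym.
  by rewrite -[X in coprimep _ X]subr0 -polyC0 coprimep_XsubC.
have [[u1 u2] /= Bezout] := Bezout_eq1_coprimepP _ _ cop.
exists (u1 * 'X ^+ e) => /=; rewrite -mulrA -exprSr.
set P := horner_mx X (u1 * 'X ^+ e.+1); set Q := horner_mx X (u2 * r).
have PQ1 : P + Q = 1 by rewrite -rmorphD Bezout rmorph1.
have PQ0 : P * Q = 0.
  rewrite -rmorphM.
  have -> : u1 * 'X ^+ e.+1 * (u2 * r) = u1 * u2 * 'X * chi by rewrite chiE exprSr; ring.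
  by rewrite rmorphM /= Cayley_Hamilton mulr0.
split; first by rewrite mulmxE -[RHS]mulr1 -PQ1 mulrDr PQ0 addr0.
have r1 : r.[1] = 0.
  have /eqP := horner_mx_fixed chi; rewrite Cayley_Hamilton mul0mx eq_sym.
  rewrite scalemx_eq0 (negbTE v0) orbF chiE hornerM hornerXn expr1n mulr1.
  by move/eqP.
have Qv : Q *m v = 0 by rewrite horner_mx_fixed hornerM r1 mulr0 scale0r.
by have := congr1 (mulmx^~ v) PQ1; rewrite /= mulmxDl Qv addr0 mul1mx.
Qed.

End FittingIdempotent.

Section FiniteSpan.
Variables (k : fieldType) (a b : nat) (T : Type) (f : T -> 'M[k]_(a, b)).

Let span_mx (s : seq T) : 'M[k]_(size s, a * b) :=
  \matrix_i mxvec (f (tnth (in_tuple s) i)).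

Let span_mx_spanning s : (forall x, mxvec (f x) <= span_mx s)%MS ->
  exists d (g : 'I_d -> T), forall x, exists c : 'I_d -> k,
    f x = \sum_(i < d) c i *: f (g i).
Proof.
move=> span_s; exists (size s), (tnth (in_tuple s)) => x.
have /submxP [w fxE] := span_s x; exists (fun i => w 0 i).
apply: (can_inj mxvecK); rewrite fxE mulmx_sum_row linear_sum.
by apply: eq_bigr => i _; rewrite linearZ rowK.
Qed.

Lemma finite_span : exists d (g : 'I_d -> T), forall x, exists c : 'I_d -> k,
  f x = \sum_(i < d) c i *: f (g i).
Proof.
suff grow t s : (a * b - \rank (span_mx s) <= t)%N ->
    exists s', forall x, (mxvec (f x) <= span_mx s')%MS.
  by have [s /span_mx_spanning] := grow _ [::] (leq_subr _ _).
elim: t s => [|t IH] s rank_s.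
  exists s => x; apply: submx_full.
  by rewrite /row_full eqn_leq rank_leq_col /=; lia.
have [span_s|/not_all_ex_not [x fx_notin]] :=
  classic (forall x, (mxvec (f x) <= span_mx s)%MS); first by exists s.
apply: (IH (x :: s)).
have sub : (span_mx s <= span_mx (x :: s))%MS.
  apply/row_subP => i; rewrite rowK; apply: (eq_row_sub (lift ord0 i)).
  by rewrite rowK !(tnth_nth x).
have lt : (span_mx s < span_mx (x :: s))%MS.
  rewrite ltmxE sub /=; apply/negP => /(submx_trans _) sub_s; apply/fx_notin/sub_s.
  by apply: (eq_row_sub ord0); rewrite rowK (tnth_nth x).
by have := rank_ltmx lt; have := rank_leq_col (span_mx (x :: s)); lia.
Qed.

End FiniteSpan.

Section SimpleAnnihilator.
Variables (k : fieldType) (G : algType k) (q : nat) (r : G -> 'M[k]_q.+1).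
Hypothesis r_rep : is_rep r.
Hypothesis r_simple :
  forall P, submodule r P -> (forall v, P v -> v = 0) \/ (forall v, P v).
Variable J : G -> Prop.
Hypotheses (ideal_J : ideal J) (J_not_ann : exists2 j0, J j0 & r j0 <> 0).

Lemma ideal_act_transitive (v : 'cV[k]_q.+1) : v != 0 ->
  forall w, exists2 x, J x & r x *m v = w.
Proof.
move=> v0; pose Jv w := exists2 x, J x & r x *m v = w.
have Jv_sub : submodule r Jv.
  split.
  - by exists 0; rewrite ?(rep0 r_rep) ?mul0mx //; apply: ideal0.
  - move=> c _ _ [x1 J1 <-] [x2 J2 <-]; exists (c *: x1 + x2).
      by apply: idealD => //; apply: idealZ.
    by rewrite (repD r_rep) (repZ r_rep) mulmxDl scalemxAl.
  - move=> y _ [x Jx <-]; exists (y * x); first exact: ideal_mull.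
    by rewrite (repM r_rep) mulmxA.
case: (r_simple Jv_sub) => [Jv0|Jv_all]; last exact: Jv_all.
pose killed (u : 'cV_q.+1) := forall x, J x -> r x *m u = 0.
have killed_sub : submodule r killed.
  split=> [x _|c u w ku kw x Jx|y u ku x Jx]; first by rewrite mulmx0.
    by rewrite mulmxDr -scalemxAr ku // kw // scaler0 addr0.
  by rewrite mulmxA -(repM r_rep) ku //; apply: ideal_mulr.
case: (r_simple killed_sub) => [killed0|killed_all].
  suff v_eq0 : v = 0 by rewrite v_eq0 eqxx in v0.
  by apply: killed0 => x Jx; apply: Jv0; exists x.
case: J_not_ann => j0 Jj0 []; apply: mulmx_delta_colP => j.
by rewrite mul0mx killed_all.
Qed.

Lemma rep_horner_mx f (p : {poly k}) : exists y, r y = horner_mx (r f) p.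
Proof.
elim/poly_ind: p => [|p c [y ry]]; first by exists 0; rewrite (rep0 r_rep) rmorph0.
exists (y * f + c *: 1); rewrite (repD r_rep) (repZ r_rep) (repM r_rep) (rep1 r_rep) ry.
by rewrite rmorphD rmorphM /= horner_mx_X horner_mx_C mulmxE scalemx1.
Qed.

(* With E := r e, pick v := (1 - E) w != 0 and f := (1 - e) x (1 - e) in J with
   r f v = v; the Fitting idempotent P of r f fixes v and is orthogonal to E,
   so E + P is a strictly larger idempotent coming from J. *)
Lemma ideal_idempotent_grow e : J e -> r e *m r e = r e -> r e <> 1%:M ->
  exists e', [/\ J e', r e' *m r e' = r e' & (\rank (r e) < \rank (r e'))%N].
Proof.
move=> Je; set E := r e => Eid E_neq1.
have [w v0] : exists w : 'cV_q.+1, (1%:M - E) *m w != 0.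
  apply: NNPP => all0; apply: E_neq1; apply/eqP; rewrite eq_sym -subr_eq0; apply/eqP.
  apply: mulmx_delta_colP => j; rewrite mul0mx; apply/eqP/negPn/negP => Ej.
  by apply: all0; exists (delta_mx j 0).
set v := (1%:M - E) *m w in v0.
have E_1E : E *m (1%:M - E) = 0 by rewrite mulmxBr mulmx1 Eid subrr.
have _1E_E : (1%:M - E) *m E = 0 by rewrite mulmxBl mul1mx Eid subrr.
have _1Ev : (1%:M - E) *m v = v by rewrite mulmxBl mul1mx /v mulmxA E_1E mul0mx subr0.
have [x Jx xv] := ideal_act_transitive v0 v.
set f := (1 - e) * x * (1 - e).
have Jf : J f by apply: (ideal_mulr _ ideal_J); apply: ideal_mull.
have rf : r f = (1%:M - E) *m r x *m (1%:M - E).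
  by rewrite /f !(repM r_rep) (repB r_rep) (rep1 r_rep).
have fv : r f *m v = v by rewrite rf -!mulmxA _1Ev xv _1Ev.
have [p [Pid Pv]] := fitting_idempotent fv v0.
have [y ry] := rep_horner_mx f p.
set P := horner_mx (r f) (p * 'X) in Pid Pv.
have PE : P = r (f * y).
  by rewrite /P [p * _]mulrC rmorphM /= horner_mx_X (repM r_rep f y) ry mulmxE.
have PE' : P = r (y * f) by rewrite /P rmorphM /= horner_mx_X (repM r_rep y f) ry mulmxE.
have EP0 : E *m P = 0 by rewrite PE (repM r_rep) rf !mulmxA E_1E !mul0mx.
have PE0 : P *m E = 0 by rewrite PE' (repM r_rep) rf -!mulmxA _1E_E !mulmx0.
exists (e + f * y); rewrite (repD r_rep) -PE; split.
- by apply: idealD => //; apply: ideal_mulr.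
- by rewrite mulmxDl !mulmxDr Eid EP0 PE0 Pid addr0 add0r.
apply: rank_ltmx; rewrite ltmxE; apply/andP; split.
  by rewrite -{1}Eid -[E *m E]addr0 -EP0 -mulmxDr submxMl.
apply/negP => /submxP [Z EPZ].
have : (E + P) *m E = E + P by rewrite {1}EPZ -mulmxA Eid -EPZ.
rewrite mulmxDl Eid PE0 addr0 => /esym; rewrite -{2}[E]addr0 => /addrI P0.
by move: v0; rewrite -Pv P0 mul0mx eqxx.
Qed.

Lemma ideal_rep_one : exists2 x, J x & r x = 1%:M.
Proof.
suff grow t e : J e -> r e *m r e = r e -> (q.+1 - \rank (r e) < t)%N ->
    exists2 x, J x & r x = 1%:M.
  by apply: (grow q.+2 0); rewrite ?(rep0 r_rep) ?mul0mx ?ltnS ?leq_subr //; apply: ideal0.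
elim: t e => [//|t IH] e Je Eid rank_e.
have [re1|re_neq1] := eqVneq (r e) 1%:M; first by exists e.
have [e' [Je' Eid' lt]] := ideal_idempotent_grow Je Eid (elimN eqP re_neq1).
by apply: (IH e') => //; have := rank_leq_row (r e'); lia.
Qed.

End SimpleAnnihilator.

Lemma simple_ann_cfs (k : fieldType) (G : algType k) q (r : G -> 'M[k]_q) (A : G -> Prop) :
  simple_rep r -> (forall x, A x <-> r x = 0) -> cfs A.
Proof.
case: q r => [|q] r [r_rep // _ r_simple] AE.
have ideal_A : ideal A.
  split=> [|x y /AE rx /AE ry|y x /AE rx]; first by apply/AE; apply: rep0.
    by apply/AE; rewrite (repD r_rep) rx ry addr0.
  by split; apply/AE; rewrite (repM r_rep) rx ?mulmx0 ?mul0mx.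
split; first split=> //.
- move=> /(_ 1) /AE; rewrite (rep1 r_rep) => /matrixP/(_ 0 0).
  by rewrite !mxE eqxx /= => /eqP; rewrite oner_eq0.
- move=> J ideal_J A_J; case: (classic (forall x, J x -> A x)) => [J_A|].
    by left => x; split; [apply: J_A | apply: A_J].
  move=> /not_all_sub [j0 [Jj0 nAj0]]; right.
  have J_not_ann : exists2 j0, J j0 & r j0 <> 0 by exists j0 => // /AE.
  have [x Jx rx1] := ideal_rep_one r_rep r_simple ideal_J J_not_ann.
  apply: ideal1_full => //; rewrite -(subrK x 1); apply: idealD => //.
  by apply/A_J/AE; rewrite (repB r_rep) (rep1 r_rep) rx1 subrr.
have [d [g span_g]] := finite_span r.
exists d, g => x; have [c rxE] := span_g x; exists c; apply/AE.
rewrite (repB r_rep) (rep_sum r_rep); under eq_bigr do rewrite (repZ r_rep).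
by rewrite rxE subrr.
Qed.

(** * Submodules as row spaces *)

Section SubmxCongruence.
Variables (F : fieldType) (m1 m2 n : nat) (D : 'M[F]_(m2, n)).
Implicit Types (A B C : 'M[F]_(m1, n)).

Lemma submxB A B : (A <= D)%MS -> (B <= D)%MS -> (A - B <= D)%MS.
Proof. by move=> AD BD; rewrite addmx_sub // eqmx_opp. Qed.

Lemma submx_subr_sym A B : (A - B <= D)%MS -> (B - A <= D)%MS.
Proof. by rewrite -opprB eqmx_opp. Qed.

Lemma submx_subr_trans A B C : (A - B <= D)%MS -> (B - C <= D)%MS -> (A - C <= D)%MS.
Proof. by move=> AB BC; rewrite -[A](subrK B) -addrA addmx_sub. Qed.

End SubmxCongruence.

(* Submodules of k^n are handled as row spaces: the row vector w stands for the
   column vector w^T, on which x acts as w *m (rho x)^T. *)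
Section RowModules.
Variables (k : fieldType) (G : algType k) (n : nat) (rho : G -> 'M[k]_n).
Hypothesis rho_rep : is_rep rho.

Definition rowact x := (rho x)^T.

Lemma rowact0 : rowact 0 = 0. Proof. by rewrite /rowact (rep0 rho_rep) trmx0. Qed.
Lemma rowact1 : rowact 1 = 1%:M. Proof. by rewrite /rowact (rep1 rho_rep) trmx1. Qed.
Lemma rowactM x y : rowact (x * y) = rowact y *m rowact x.
Proof. by rewrite /rowact (repM rho_rep) trmx_mul. Qed.
Lemma rowactD x y : rowact (x + y) = rowact x + rowact y.
Proof. by rewrite /rowact (repD rho_rep) linearD. Qed.
Lemma rowactZ (c : k) x : rowact (c *: x) = c *: rowact x.
Proof. by rewrite /rowact (repZ rho_rep) linearZ. Qed.
Lemma rowact_sum d (F : 'I_d -> G) : rowact (\sum_(i < d) F i) = \sum_(i < d) rowact (F i).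
Proof. by rewrite /rowact (rep_sum rho_rep) linear_sum. Qed.

Definition stable m (U : 'M[k]_(m, n)) := forall x, (U *m rowact x <= U)%MS.

(* T/N is simple or zero. *)
Definition simple_quo (N T : 'M[k]_n) := forall X : 'M_n, stable X ->
  (N <= X)%MS -> (X <= T)%MS -> (X <= N)%MS \/ (T <= X)%MS.

(* Z/N is a complement of T/N in Y/N. *)
Definition quo_complement (N T Y Z : 'M[k]_n) :=
  [/\ stable Z, (N <= Z)%MS, (Z <= Y)%MS, (Z :&: T <= N)%MS & (Y <= Z + T)%MS].

Lemma stable_cap m1 m2 (X : 'M[k]_(m1, n)) (Y : 'M[k]_(m2, n)) :
  stable X -> stable Y -> stable (X :&: Y)%MS.
Proof.
move=> sX sY x; rewrite sub_capmx (submx_trans (submxMr _ (capmxSl _ _)) (sX x)).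
by rewrite (submx_trans (submxMr _ (capmxSr _ _)) (sY x)).
Qed.

Lemma stable_adds m1 m2 (X : 'M[k]_(m1, n)) (Y : 'M[k]_(m2, n)) :
  stable X -> stable Y -> stable (X + Y)%MS.
Proof. by move=> sX sY x; rewrite addsmxMr addsmxS. Qed.

Lemma cyclic_submx (u : 'rV[k]_n) : exists d (C : 'M[k]_(d, n)),
  (forall x, (u *m rowact x <= C)%MS) /\ (forall b : 'rV_d, exists y, b *m C = u *m rowact y).
Proof.
have [d [g span_g]] := finite_span rowact.
exists d, (\matrix_i (u *m rowact (g i))); split=> [x | b].
  have [c ->] := span_g x; rewrite mulmx_sumr summx_sub // => i _.
  by rewrite -scalemxAr scalemx_sub // (eq_row_sub i) // rowK.
exists (\sum_i b 0 i *: g i); rewrite mulmx_sum_row rowact_sum mulmx_sumr.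
by apply: eq_bigr => i _; rewrite rowK rowactZ scalemxAr.
Qed.

Lemma cyclic_submx_stable d (u : 'rV[k]_n) (C : 'M[k]_(d, n)) :
  (forall x, (u *m rowact x <= C)%MS) -> (forall b : 'rV_d, exists y, b *m C = u *m rowact y) ->
  stable C.
Proof.
move=> uC Cu x; apply/row_subP => i; rewrite row_mul rowE.
by have [y ->] := Cu (delta_mx 0 i); rewrite -mulmxA -rowactM.
Qed.

(* Coordinates of the action on (B + N)/N in the basis given by the rows of B. *)
Section Coordinates.
Variables (d : nat) (B : 'M[k]_(d, n)) (N : 'M[k]_n).
Hypotheses (B_free : row_free B) (BN0 : (B :&: N <= (0 : 'M_n))%MS) (N_stable : stable N).
Hypothesis B_stable : forall x, (B *m rowact x <= B + N)%MS.

Definition coord_rep (R : G -> 'M[k]_d) := forall x, (B *m rowact x - R x *m B <= N)%MS.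

Lemma coord_eq0 p (a : 'M[k]_(p, d)) : (a *m B <= N)%MS -> a = 0.
Proof.
move=> aBN; have : (a *m B <= (0 : 'M_n))%MS by rewrite (submx_trans _ BN0) // sub_capmx submxMl.
by rewrite submx0 mulmx_free_eq0 // => /eqP.
Qed.

Definition coord_act x := B *m rowact x *m proj_mx <<B>>%MS N *m pinvmx B.

Lemma coord_act_rep : coord_rep coord_act.
Proof.
have BN_0 : (<<B>> :&: N = 0)%MS.
  by apply/eqP; rewrite -submx0 (submx_trans _ BN0) // capmxS // genmxE.
move=> x; rewrite /coord_act mulmxKpV.
  by rewrite proj_mx_compl_sub // (submx_trans (B_stable x)) // addsmxS // genmxE.
by rewrite (submx_trans (proj_mx_sub _ _ _)) // genmxE.
Qed.

Variable R : G -> 'M[k]_d.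
Hypothesis R_coord : coord_rep R.

Lemma coord_repM x y : R (x * y) = R y *m R x.
Proof.
apply/eqP; rewrite -subr_eq0; apply/eqP; apply: coord_eq0; rewrite mulmxBl.
apply: (submx_subr_trans (submx_subr_sym (R_coord _))).
apply: (@submx_subr_trans _ _ _ _ _ _ (R y *m B *m rowact x)).
  by rewrite rowactM mulmxA -mulmxBl (submx_trans (submxMr _ (R_coord y))).
by rewrite -!mulmxA -mulmxBr (submx_trans (submxMl _ _)).
Qed.

Lemma coord_rep1 : R 1 = 1%:M.
Proof.
apply/eqP; rewrite -subr_eq0; apply/eqP; apply: coord_eq0.
by rewrite mulmxBl mul1mx submx_subr_sym // -[B in B - _]mulmx1 -rowact1.
Qed.

Lemma coord_rep_linear (c : k) x y : R (c *: x + y) = c *: R x + R y.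
Proof.
apply/eqP; rewrite -subr_eq0; apply/eqP; apply: coord_eq0; rewrite mulmxBl.
apply: (submx_subr_trans (submx_subr_sym (R_coord _))).
rewrite rowactD rowactZ mulmxDr -scalemxAr mulmxDl -scalemxAl opprD addrACA -scalerBr.
by rewrite addmx_sub ?scalemx_sub.
Qed.

Lemma coord_rep_eq0 x : R x = 0 <-> (B *m rowact x <= N)%MS.
Proof.
split=> [Rx0 | BxN]; first by have := R_coord x; rewrite Rx0 mul0mx subr0.
by apply: coord_eq0; rewrite -[R x *m B](subKr (B *m rowact x)) submxB.
Qed.

Lemma coord_rep_is_rep : is_rep (fun x => (R x)^T).
Proof.
split=> [c x y||x y]; first by rewrite coord_rep_linear linearD linearZ.
  by rewrite coord_rep1 trmx1.
by rewrite coord_repM trmx_mul.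
Qed.

Lemma coord_rep_simple : (0 < d)%N ->
  (forall X : 'M_n, stable X -> (N <= X)%MS -> (X <= B + N)%MS ->
    (X <= N)%MS \/ (B + N <= X)%MS) ->
  simple_rep (fun x => (R x)^T).
Proof.
move=> d_gt0 BN_simple; split=> // [|P [_ _ P_stable]]; first exact: coord_rep_is_rep.
have [P0|/not_all_sub [v [Pv v_neq0]]] := classic (forall v, P v -> v = 0); [by left | right].
pose u := v^T *m B; have [e [C [uC Cu]]] := cyclic_submx u.
have u_NC : (u <= N + C)%MS by rewrite (submx_trans _ (addsmxSr _ _)) // -[u]mulmx1 -rowact1.
have NC_BN : (N + C <= B + N)%MS.
  rewrite addsmx_sub addsmxSr; apply/row_subP => i; rewrite rowE.
  by have [y ->] := Cu (delta_mx 0 i); rewrite -mulmxA (submx_trans (submxMl _ _) (B_stable y)).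
have NC_stable : stable (N + C)%MS by apply: stable_adds => //; apply: cyclic_submx_stable uC Cu.
case: (BN_simple _ NC_stable (addsmxSl _ _) NC_BN) => [NC_N | BN_NC].
  by case: v_neq0; apply: trmx_inj; rewrite trmx0; apply: coord_eq0; apply: submx_trans NC_N.
(* w^T B = a N + v^T B rowact y, and v^T B rowact y = v^T R y B modulo N *)
move=> w; have /sub_addsmxP [[a b] /= wE] : (w^T *m B <= N + C)%MS.
  by rewrite (submx_trans _ BN_NC) // (submx_trans (submxMl _ _) (addsmxSl _ _)).
have [y bC] := Cu b.
suff -> : w = (R y)^T *m v by apply: P_stable.
apply: trmx_inj; rewrite trmx_mul trmxK; apply/eqP; rewrite -subr_eq0; apply/eqP.
apply: coord_eq0; rewrite mulmxBl wE bC -addrA -mulmxA -mulmxA -mulmxBr.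
by rewrite addmx_sub ?submxMl // (submx_trans (submxMl _ _)).
Qed.

End Coordinates.

Section ComplementBasis.
Variables (N T : 'M[k]_n).

Definition compl_basis := row_base (T :\: N)%MS.

Lemma compl_basis_free : row_free compl_basis. Proof. exact: row_base_free. Qed.
Lemma compl_basis_sub : (compl_basis <= T)%MS. Proof. by rewrite eq_row_base diffmxSl. Qed.
Lemma compl_basis_cap0 : (compl_basis :&: N <= (0 : 'M_n))%MS.
Proof. by rewrite -(capmx_diff T N) capmxS ?eq_row_base. Qed.
Lemma compl_basis_span : (T <= compl_basis + N)%MS.
Proof.
have /eqmxP/andP [_ T_sub] := addsmx_diff_cap_eq T N.
by rewrite (submx_trans T_sub) // addsmxS ?eq_row_base ?capmxSr.
Qed.
Lemma compl_basis_rank_gt0 : ~~ (T <= N)%MS -> (0 < \rank (T :\: N))%N.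
Proof.
apply: contraR; rewrite -eqn0Ngt mxrank_eq0 => /eqP TN0.
by rewrite -(addsmx_diff_cap_eq T N) TN0 adds0mx capmxSr.
Qed.

Hypotheses (N_stable : stable N) (T_stable : stable T) (NT : (N <= T)%MS).

Lemma compl_basis_adds : (compl_basis + N :=: T)%MS.
Proof. by apply/eqmxP; rewrite compl_basis_span addsmx_sub compl_basis_sub NT. Qed.

Lemma compl_basis_stable x : (compl_basis *m rowact x <= compl_basis + N)%MS.
Proof. by rewrite compl_basis_adds (submx_trans (submxMr _ compl_basis_sub)). Qed.

Section CoordinateRepresentation.
Variable R : G -> 'M[k]_(\rank (T :\: N)).
Hypothesis R_coord : coord_rep compl_basis N R.

Lemma simple_quo_coord_simple : ~~ (T <= N)%MS -> simple_quo N T ->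
  simple_rep (fun x => (R x)^T).
Proof.
move=> TN NT_simple; apply: (coord_rep_simple compl_basis_free compl_basis_cap0
  N_stable compl_basis_stable R_coord (compl_basis_rank_gt0 TN)).
by move=> X X_stable NX; rewrite !compl_basis_adds; apply: NT_simple.
Qed.

Lemma coord_rep_ann_quo x : (R x)^T = 0 <-> (T *m rowact x <= N)%MS.
Proof.
have Bx_eq0 := coord_rep_eq0 compl_basis_free compl_basis_cap0 R_coord x.
split=> [/(congr1 trmx) | TxN]; last first.
  by rewrite (proj2 Bx_eq0) ?trmx0 // (submx_trans (submxMr _ compl_basis_sub)).
rewrite trmxK trmx0 => /Bx_eq0 BxN.
by rewrite (submx_trans (submxMr _ compl_basis_span)) // addsmxMr addsmx_sub BxN N_stable.
Qed.

End CoordinateRepresentation.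

Lemma simple_quo_ann_cfs : ~~ (T <= N)%MS -> simple_quo N T ->
  cfs (fun x => (T *m rowact x <= N)%MS).
Proof.
have R_coord := coord_act_rep compl_basis_cap0 compl_basis_stable.
move=> TN NT_simple; apply: (simple_ann_cfs (simple_quo_coord_simple R_coord TN NT_simple)).
by move=> x; rewrite coord_rep_ann_quo.
Qed.

End ComplementBasis.

End RowModules.

(** * Complements in quotients *)

Section StableLift.
Variables (k : fieldType) (G : algType k) (n : nat) (rho : G -> 'M[k]_n).
Local Notation rowact := (rowact rho).
Local Notation stable := (stable rho).

Variables (N T Y : 'M[k]_n) (p : nat) (Bm S : 'M[k]_(p, n)).
Hypotheses (N_stable : stable N) (NT : (N <= T)%MS) (TY : (T <= Y)%MS).
Hypotheses (Bm_free : row_free Bm) (BmT0 : (Bm :&: T <= (0 : 'M_n))%MS).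
Hypothesis Y_BmT : (Y <= Bm + T)%MS.
Hypotheses (S_Bm : (S - Bm <= T)%MS) (S_Y : (S <= Y)%MS).
Hypothesis S_stable : forall x, (S *m rowact x <= S + N)%MS.

Lemma stable_lift_complement : quo_complement rho N T Y (N + S)%MS.
Proof.
split=> [x||||].
- by rewrite addsmxMr addsmx_sub (submx_trans (N_stable x) (addsmxSl _ _)) addsmxC S_stable.
- exact: addsmxSl.
- by rewrite addsmx_sub S_Y (submx_trans NT TY).
- set W := ((N + S) :&: T)%MS.
  have /sub_addsmxP [[c b] /= WE] : (W <= N + S)%MS := capmxSl _ _.
  have bS : b *m S = W - c *m N by rewrite WE addrC addKr.
  suff b0 : b = 0 by rewrite WE b0 mul0mx addr0 submxMl.
  apply: (coord_eq0 Bm_free BmT0).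
  have -> : b *m Bm = b *m S - b *m (S - Bm) by rewrite mulmxBr subKr.
  by rewrite bS !submxB ?capmxSr ?(submx_trans (submxMl _ _)).
- rewrite (submx_trans Y_BmT) // addsmx_sub addsmxSr andbT.
  have -> : Bm = S - (S - Bm) by rewrite subKr.
  rewrite submxB ?(submx_trans (addsmxSr N S) (addsmxSl _ _)) //.
  exact: submx_trans S_Bm (addsmxSr _ _).
Qed.

End StableLift.

Section ExtensionComplement.
Variables (k : fieldType) (G : algType k) (n : nat) (rho : G -> 'M[k]_n).
Hypothesis rho_rep : is_rep rho.
Local Notation rowact := (rowact rho).
Local Notation stable := (stable rho).
Local Notation simple_quo := (simple_quo rho).

Variables (m a : G -> Prop) (N T Y : 'M[k]_n).
Hypotheses (QC : quasicommutative G) (cfs_m : cfs m) (cfs_a : cfs a) (ma : ~ same_set m a).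
Hypotheses (N_stable : stable N) (T_stable : stable T) (Y_stable : stable Y).
Hypotheses (NT : (N <= T)%MS) (TY : (T <= Y)%MS) (TN : ~~ (T <= N)%MS) (YT : ~~ (Y <= T)%MS).
Hypotheses (NT_simple : simple_quo N T) (TY_simple : simple_quo T Y).
Hypotheses (a_ann : forall x, a x -> (T *m rowact x <= N)%MS).
Hypotheses (m_ann : forall x, m x -> (Y *m rowact x <= T)%MS).

Let Ba := compl_basis N T.
Let Bm := compl_basis T Y.
Let B := col_mx Ba Bm.

Let Ba_T : (Ba <= T)%MS. Proof. exact: compl_basis_sub. Qed.
Let BmT0 : (Bm :&: T <= (0 : 'M_n))%MS. Proof. exact: compl_basis_cap0. Qed.
Let Ba_B : (Ba <= B)%MS. Proof. by rewrite -addsmxE addsmxSl. Qed.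
Let Bm_B : (Bm <= B)%MS. Proof. by rewrite -addsmxE addsmxSr. Qed.
Let B_Y : (B <= Y)%MS.
Proof. by rewrite -addsmxE addsmx_sub compl_basis_sub (submx_trans Ba_T TY). Qed.
Let BN : (B + N :=: Y)%MS.
Proof.
apply/eqmxP; rewrite addsmx_sub B_Y (submx_trans NT TY) /=.
rewrite -(compl_basis_adds TY) addsmx_sub -(compl_basis_adds NT) addsmx_sub addsmxSr.
by rewrite !(submx_trans _ (addsmxSl B N)) ?Ba_B ?Bm_B.
Qed.

Let B_free : row_free B.
Proof.
rewrite /row_free -addsmxE mxrank_disjoint_sum.
  by rewrite (eqP (compl_basis_free N T)) (eqP (compl_basis_free T Y)).
by apply/eqP; rewrite -submx0 capmxC (submx_trans _ BmT0) // capmxS.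
Qed.

Let BN0 : (B :&: N <= (0 : 'M_n))%MS.
Proof.
rewrite (submx_trans _ (compl_basis_cap0 N T)) // sub_capmx capmxSr andbT.
rewrite (submx_trans (capmxS (submx_refl B) NT)) //.
have B_adds : (B <= Ba + Bm)%MS by rewrite addsmxE.
rewrite (submx_trans (capmxS B_adds (submx_refl T))) // -matrix_modl //.
by rewrite addsmx_sub submx_refl (submx_trans BmT0) ?sub0mx.
Qed.

Let B_stable x : (B *m rowact x <= B + N)%MS.
Proof. by rewrite BN (submx_trans (submxMr _ B_Y)). Qed.

Let R := coord_act rho B N.
Let R_coord : coord_rep rho B N R := coord_act_rep BN0 B_stable.
Let Ra x := ulsubmx (R x).
Let Rm x := drsubmx (R x).

Let R_blocks x :
  (Ba *m rowact x - (Ra x *m Ba + ursubmx (R x) *m Bm) <= N)%MS /\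
  (Bm *m rowact x - (dlsubmx (R x) *m Ba + Rm x *m Bm) <= N)%MS.
Proof.
have := R_coord x; rewrite /B mul_col_mx -{1}[R x]submxK mul_block_col.
by rewrite opp_col_mx add_col_mx col_mx_sub; move/andP.
Qed.

(* T/N is a submodule of Y/N: the coordinate matrices are block triangular. *)
Let R_ur0 x : ursubmx (R x) = 0.
Proof.
apply: (coord_eq0 (compl_basis_free T Y) BmT0); have [RaN _] := R_blocks x.
set u := Ba *m rowact x; set v := Ra x *m Ba; set w := ursubmx (R x) *m Bm.
have vw_T : ((v + w)%R <= T)%MS.
  have -> : v + w = u - (u - (v + w)) by rewrite subKr.
  by rewrite submxB ?(submx_trans RaN) ?(submx_trans (submxMr _ Ba_T)).
have -> : w = (v + w) - v by rewrite addrC addKr.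
by rewrite submxB // /v (submx_trans (submxMl _ _)).
Qed.

Let Ra_coord : coord_rep rho Ba N Ra.
Proof. by move=> x; have [] := R_blocks x; rewrite R_ur0 mul0mx addr0. Qed.

Let Rm_coord : coord_rep rho Bm T Rm.
Proof.
move=> x; have [_ RmN] := R_blocks x.
have -> : Bm *m rowact x - Rm x *m Bm =
    Bm *m rowact x - (dlsubmx (R x) *m Ba + Rm x *m Bm) + dlsubmx (R x) *m Ba.
  by rewrite opprD addrA addrAC subrK.
by rewrite addmx_sub ?(submx_trans RmN NT) ?(submx_trans (submxMl _ _) Ba_T).
Qed.

Lemma ext1_complement : exists Z, quo_complement rho N T Y Z.
Proof.
have R_rep := coord_rep_is_rep rho_rep B_free BN0 N_stable R_coord.
(* Transposed, R is an extension of the action on Y/T by the action on T/N. *)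
have RE x : (R x)^T = block_mx (Ra x)^T (dlsubmx (R x))^T 0 (Rm x)^T.
  by rewrite -{1}[R x]submxK tr_block_mx R_ur0 trmx0.
have E_rep : is_rep (fun x => block_mx (Ra x)^T (dlsubmx (R x))^T 0 (Rm x)^T).
  by case: R_rep => lin one mul; split=> *; rewrite -!RE.
have Ra_ann : annihilated (fun x => (Ra x)^T) a.
  by move=> x /a_ann /(coord_rep_ann_quo N_stable Ra_coord).
have Rm_ann : annihilated (fun x => (Rm x)^T) m.
  by move=> x /m_ann /(coord_rep_ann_quo T_stable Rm_coord).
have [s [s_hom s_d1]] := QC cfs_m cfs_a ma
  (simple_quo_coord_simple rho_rep T_stable Y_stable TY Rm_coord YT TY_simple) Rm_ann
  (simple_quo_coord_simple rho_rep N_stable T_stable NT Ra_coord TN NT_simple) Ra_ann E_rep.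
have s_homT x : s^T *m R x = Rm x *m s^T.
  by apply: trmx_inj; rewrite [LHS]trmx_mul [RHS]trmx_mul !trmxK RE s_hom.
have SE : s^T *m B = (usubmx s)^T *m Ba + Bm.
  by rewrite -[s]vsubmxK tr_col_mx col_mxKu s_d1 trmx1 mul_row_col mul1mx.
exists (N + s^T *m B)%MS.
apply: stable_lift_complement (compl_basis_free T Y) BmT0 _ _ _ _ => //.
- by rewrite compl_basis_adds.
- by rewrite SE addrK (submx_trans (submxMl _ _)).
- by rewrite (submx_trans (submxMl _ _)).
move=> x; have -> : s^T *m B *m rowact x =
    s^T *m (R x *m B) + s^T *m (B *m rowact x - R x *m B).
  by rewrite -mulmxDr addrC subrK mulmxA.
rewrite mulmxA s_homT -mulmxA addmx_sub ?(submx_trans (submxMl _ _) (addsmxSl _ _)) //.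
by rewrite (submx_trans (submxMl _ _)) // (submx_trans (R_coord x)) ?addsmxSr.
Qed.

End ExtensionComplement.

Section Complement.
Variables (k : fieldType) (G : algType k) (n : nat) (rho : G -> 'M[k]_n).
Hypothesis rho_rep : is_rep rho.
Local Notation rowact := (rowact rho).
Local Notation stable := (stable rho).
Local Notation simple_quo := (simple_quo rho).
Local Notation quo_complement := (quo_complement rho).
Implicit Types (N T U X Y Z : 'M[k]_n).

Lemma simple_quo_exists N U : stable U -> (N <= U)%MS -> ~~ (U <= N)%MS ->
  exists T, [/\ stable T, (N <= T)%MS, (T <= U)%MS, ~~ (T <= N)%MS & simple_quo N T].
Proof.
elim/ltn_ind: {U}(\rank U) {-2}U (erefl (\rank U)) => r IH U rU U_stable NU UN.
have [U_simple|U_not_simple] := classic (simple_quo N U); first by exists U.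
have [X [X_stable NX XU XN UX]] : exists X, [/\ stable X, (N <= X)%MS, (X <= U)%MS,
    ~~ (X <= N)%MS & ~~ (U <= X)%MS].
  apply: NNPP => noX; apply: U_not_simple => X X_stable NX XU.
  case: (boolP (X <= N)%MS) => [|XN]; [by left | right].
  by apply: contraNT (XN) => UX; case: noX; exists X.
have [|T [T_stable NT TX TN NT_simple]] := IH _ _ X erefl X_stable NX XN.
  by rewrite -rU rank_ltmx // ltmxE XU.
by exists T; split=> //; apply: submx_trans TX XU.
Qed.

Section QuoComplement.
Variables (N T Y Z : 'M[k]_n).
Hypotheses (T_stable : stable T) (NT : (N <= T)%MS) (TY : (T <= Y)%MS).
Hypothesis NTYZ : quo_complement N T Y Z.

Lemma quo_complement_proper : ~~ (T <= N)%MS -> ~~ (Y <= Z)%MS.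
Proof.
case: NTYZ => _ _ _ ZTN _ TN; apply: contra TN => YZ; apply: submx_trans ZTN.
by rewrite sub_capmx submx_refl (submx_trans TY YZ).
Qed.

(* Y/Z is isomorphic to T/N. *)
Lemma quo_complement_simple : simple_quo N T -> simple_quo Z Y.
Proof.
case: NTYZ => _ NZ _ ZTN YZT NT_simple X X_stable ZX XY.
have NXT : (N <= X :&: T)%MS by rewrite sub_capmx (submx_trans NZ ZX) NT.
case: (NT_simple _ (stable_cap X_stable T_stable) NXT (capmxSr _ _)) => [XTN|TX]; [left|right].
  have XZT : (X <= (Z + T) :&: X)%MS by rewrite sub_capmx submx_refl (submx_trans XY YZT).
  rewrite (submx_trans XZT) // -matrix_modl // addsmx_sub submx_refl capmxC.
  exact: submx_trans XTN NZ.
by rewrite (submx_trans YZT) // addsmx_sub ZX (submx_trans TX (capmxSl _ _)).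
Qed.

Lemma quo_complement_ann x : (T *m rowact x <= N)%MS -> (Y *m rowact x <= Z)%MS.
Proof.
case: NTYZ => Z_stable NZ _ _ YZT TxN.
rewrite (submx_trans (submxMr _ YZT)) // addsmxMr addsmx_sub Z_stable.
exact: submx_trans TxN NZ.
Qed.

Lemma quo_complement_trans Y' Z' : quo_complement Z Y Y' Z' -> quo_complement N T Y' Z'.
Proof.
case: NTYZ => _ NZ ZY ZTN YZT [Z'_stable ZZ' Z'Y' Z'YZ Y'Z'Y].
split=> //; first exact: submx_trans NZ ZZ'.
  rewrite (submx_trans _ ZTN) // sub_capmx capmxSr (submx_trans _ Z'YZ) //.
  by rewrite capmxS.
by rewrite (submx_trans Y'Z'Y) // addsmx_sub addsmxSl (submx_trans YZT) ?addsmxS.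
Qed.

End QuoComplement.

Hypothesis QC : quasicommutative G.

(* Induction along a composition series of Y/T: each step splits an extension
   of two simple modules with distinct annihilators. *)
Lemma complement_simple_quo m a e N T Y : cfs m -> cfs a -> ~ same_set m a ->
  stable N -> stable T -> stable Y -> (N <= T)%MS -> (T <= Y)%MS -> ~~ (T <= N)%MS ->
  simple_quo N T -> (forall x, a x -> (T *m rowact x <= N)%MS) ->
  (forall x, idpow m e x -> (Y *m rowact x <= T)%MS) ->
  exists Z, quo_complement N T Y Z.
Proof.
move=> cfs_m cfs_a ma; have [[ideal_m _ _] _] := cfs_m.
have [r rTY] : exists r, (\rank Y - \rank T < r)%N by exists (\rank Y - \rank T).+1.
elim: r N T Y rTY => [//|r IH] N T Y rTY N_stable T_stable Y_stable NT TY TN NT_simple.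
move=> a_ann me_ann.
have [YT|YT] := boolP (Y <= T)%MS.
  exists N; split=> //; [exact: submx_trans TY | exact: capmxSl |].
  exact: submx_trans YT (addsmxSr _ _).
have [Y1 [Y1_stable TY1 Y1Y Y1T TY1_simple]] := simple_quo_exists Y_stable TY YT.
have m_ann x : m x -> (Y1 *m rowact x <= T)%MS.
  have [maxY1 _] := simple_quo_ann_cfs rho_rep T_stable Y1_stable TY1 Y1T TY1_simple.
  apply: (max_ideal_idpow_sub maxY1 ideal_m (e := e)) => y /me_ann.
  exact: submx_trans (submxMr _ Y1Y).
have [Z1 NTY1Z1] := ext1_complement rho_rep QC cfs_m cfs_a ma
  N_stable T_stable Y1_stable NT TY1 TN Y1T NT_simple TY1_simple a_ann m_ann.
have [Z1_stable _ Z1Y1 _ _] := NTY1Z1.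
have [|Z Z1Y1YZ] := IH Z1 Y1 Y _ Z1_stable Y1_stable Y_stable Z1Y1 Y1Y
    (quo_complement_proper TY1 NTY1Z1 TN) (quo_complement_simple T_stable NT NTY1Z1 NT_simple)
    (fun x ax => quo_complement_ann NTY1Z1 (a_ann x ax))
    (fun x mex => submx_trans (me_ann x mex) TY1).
  have TltY1 : (T < Y1)%MS by rewrite ltmxE TY1.
  by have := rank_ltmx TltY1; have := mxrankS Y1Y; lia.
by exists Z; apply: (quo_complement_trans TY1 NTY1Z1).
Qed.

End Complement.

Lemma big_ord_unlift_max (V : nmodType) l (F : 'I_l -> V) (x : V) :
  \sum_(i < l.+1) oapp F x (unlift ord_max i) = \sum_(i < l) F i + x.
Proof.
rewrite big_ord_recr /= unlift_none; congr (_ + _); apply: eq_bigr => j _.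
have -> : widen_ord (leqnSn l) j = lift ord_max j.
  by apply: val_inj; rewrite /= /bump leqNgt ltn_ord.
by rewrite liftK.
Qed.

(** * The composition series argument *)

Section GeneralizedWeightModulo.
Variables (k : fieldType) (G : algType k) (n : nat) (rho : G -> 'M[k]_n).
Hypothesis rho_rep : is_rep rho.
Local Notation rowact := (rowact rho).
Local Notation stable := (stable rho).
Local Notation simple_quo := (simple_quo rho).
Implicit Types (N T Y : 'M[k]_n) (m a : G -> Prop) (w z : 'rV[k]_n).

Definition gwspace_mod N m w := exists e, forall x, idpow m e x -> (w *m rowact x <= N)%MS.

Definition gw_spanned_mod N := forall w, exists l (ms : 'I_l -> G -> Prop) (ws : 'I_l -> 'rV[k]_n),
  (forall i, cfs (ms i) /\ gwspace_mod N (ms i) (ws i)) /\ (w - \sum_(i < l) ws i <= N)%MS.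

Lemma gwspace_mod_same_set N m m' w : same_set m m' -> gwspace_mod N m w -> gwspace_mod N m' w.
Proof. by move=> mm' [e Hw]; exists e => x /(idpow_same_set (same_set_sym mm')) /Hw. Qed.

Lemma gwspace_mod_idpowS N T a w e : (forall x, a x -> (T *m rowact x <= N)%MS) ->
  (forall x, idpow a e x -> (w *m rowact x <= T)%MS) ->
  forall x, idpow a e.+1 x -> (w *m rowact x <= N)%MS.
Proof.
move=> a_ann Hw x /=; elim=> [|b y ab ey|y z _ Hy _ Hz].
- by rewrite rowact0 // mulmx0 sub0mx.
- by rewrite rowactM // mulmxA (submx_trans (submxMr _ (Hw _ ey))) ?a_ann.
- by rewrite rowactD // mulmxDr addmx_sub.
Qed.

Hypothesis QC : quasicommutative G.

Section SimpleStep.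
Variables N T : 'M[k]_n.
Hypotheses (N_stable : stable N) (T_stable : stable T) (NT : (N <= T)%MS).
Hypotheses (TN : ~~ (T <= N)%MS) (NT_simple : simple_quo N T).

Let a x := (T *m rowact x <= N)%MS.
Let cfs_a : cfs a. Proof. exact: simple_quo_ann_cfs. Qed.

(* If m = a, w itself works with one more power of m.  Otherwise w generates,
   together with T, a submodule Y with Y/T killed by a power of m, and the lift
   is the component of w in a complement of T/N in Y/N. *)
Lemma gwspace_mod_lift m w : cfs m -> gwspace_mod T m w ->
  exists z, gwspace_mod N m z /\ (w - z <= T)%MS.
Proof.
move=> cfs_m [e we_T]; have [[ideal_m _ _] _] := cfs_m.
have [ma|ma] := classic (same_set m a).
  exists w; rewrite subrr sub0mx; split=> //.
  apply: (gwspace_mod_same_set (same_set_sym ma)); exists e.+1.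
  apply: (gwspace_mod_idpowS (T := T)) => // x /(idpow_same_set (same_set_sym ma)).
  exact: we_T.
have [d [C [wC Cw]]] := cyclic_submx rho_rep w.
have Y_stable : stable (T + C)%MS.
  exact: stable_adds T_stable (cyclic_submx_stable rho_rep wC Cw).
have wY : (w <= T + C)%MS.
  by rewrite (submx_trans _ (addsmxSr _ _)) // -[w]mulmx1 -(rowact1 rho_rep).
have me_ann x : idpow m e x -> ((T + C)%MS *m rowact x <= T)%MS.
  move=> mex; rewrite addsmxMr addsmx_sub T_stable; apply/row_subP => i.
  rewrite row_mul rowE; have [y ->] := Cw (delta_mx 0 i).
  by rewrite -mulmxA -(rowactM rho_rep) we_T //; apply: ideal_mulr (idpow_ideal e ideal_m) mex.
have [Z [Z_stable NZ ZY ZT YZT]] := complement_simple_quo rho_rep QC cfs_m cfs_a ma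
  N_stable T_stable Y_stable NT (addsmxSl _ _) TN NT_simple (fun x ax => ax) me_ann.
have /sub_addsmxP [[u v] /= wE] := submx_trans wY YZT.
exists (u *m Z); split; last by rewrite wE addrC addKr submxMl.
exists e => x mex; rewrite (submx_trans _ ZT) // sub_capmx.
rewrite -mulmxA (submx_trans (submxMl _ _) (Z_stable x)) /=.
have -> : u *m (Z *m rowact x) = w *m rowact x - v *m T *m rowact x.
  by rewrite mulmxA wE mulmxDl addrK.
rewrite submxB ?(submx_trans (submxMr _ wY)) ?me_ann //.
by rewrite -mulmxA (submx_trans (submxMl _ _)).
Qed.

Lemma gw_spanned_mod_step : gw_spanned_mod T -> gw_spanned_mod N.
Proof.
move=> T_spanned w; have [l [ms [ws [Hws wT]]]] := T_spanned w.
have lift_i i : exists z, gwspace_mod N (ms i) z /\ (ws i - z <= T)%MS.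
  by have [cfs_i gw_i] := Hws i; apply: gwspace_mod_lift.
have [z /all_and2 [gw_z wzT]] := fin_all_exists lift_i.
(* The remainder t0 lies in T, hence is of weight a modulo N. *)
set t0 := w - \sum_(i < l) z i.
have t0T : (t0 <= T)%MS.
  have -> : t0 = (w - \sum_(i < l) ws i) + \sum_(i < l) (ws i - z i).
    by rewrite sumrB addrA subrK.
  by rewrite addmx_sub // summx_sub.
exists l.+1, (fun i => oapp ms a (unlift ord_max i)), (fun i => oapp z t0 (unlift ord_max i)).
split; last by rewrite big_ord_unlift_max /t0 [_ + (w - _)]addrC subrK subrr sub0mx.
move=> i; case: (unliftP ord_max i) => [j _|_] /=; first by have [] := Hws j.
have [[ideal_a _ _] _] := cfs_a.
by split=> //; exists 1%N => x /(idpow1_sub ideal_a) ax; rewrite (submx_trans (submxMr _ t0T)).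
Qed.

End SimpleStep.

Lemma gw_spanned_mod_stable N : stable N -> gw_spanned_mod N.
Proof.
have [r rN] : exists r, (n - \rank N < r)%N by exists (n - \rank N).+1.
elim: r N rN => [//|r IH] N rN N_stable.
have [full|not_full] := boolP (1%:M <= N)%MS.
  move=> w; exists 0%N, (fun _ _ => True), (fun _ => 0); split=> [[]//|].
  by rewrite big_ord0 subr0 (submx_trans (submx1 _) full).
have [T [T_stable NT _ TN NT_simple]] :=
  simple_quo_exists (rho := rho) (fun x => submx1 _) (submx1 N) not_full.
apply: (gw_spanned_mod_step N_stable T_stable NT TN NT_simple); apply: IH => //.
have NltT : (N < T)%MS by rewrite ltmxE NT.
by have := rank_ltmx NltT; have := rank_leq_col T; lia.
Qed.

End GeneralizedWeightModulo.

Lemma quasicommutative_gen_weight (k : fieldType) (G : algType k) : quasicommutative G ->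
  forall (n : nat) (rho : G -> 'M[k]_n), is_rep rho -> gen_weight rho.
Proof.
move=> QC n rho rho_rep; split=> [v | l ms ws ms_neq Hws]; last first.
  by apply: (gen_weight_uniq rho_rep ms_neq) => i; have [[maxi _] gwi] := Hws i.
have zero_stable : stable rho (0 : 'M[k]_n) by move=> x; rewrite mul0mx sub0mx.
have [l [ms [ws [Hws vE]]]] := gw_spanned_mod_stable rho_rep QC zero_stable v^T.
exists l, ms, (fun i => (ws i)^T); split.
  move=> i; have [cfs_i [e He]] := Hws i; split=> //; exists e => x /He.
  by rewrite submx0 => /eqP wx0; apply: trmx_inj; rewrite trmx_mul trmxK trmx0.
by move: vE; rewrite submx0 subr_eq0 => /eqP vE; rewrite -[v]trmxK vE linear_sum.
Qed.

Theorem mainTheorem9 (k : fieldType) (G : algType k) :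
  quasicommutative G <->
  (forall (n : nat) (rho : G -> 'M[k]_n), is_rep rho -> gen_weight rho).
Proof.
split; [exact: quasicommutative_gen_weight | exact: gen_weight_quasicommutative].
Qed.
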